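(* Let $\mathcal E$ be a completely positive trace-preserving map on $M_d$, and let $L\ge1$ be an integer. Regard $\mathcal E^L$ as a linear operator on the $d^2$-dimensional space $M_d$, with trace $\mathrm{Tr}(\mathcal E^L)$; equivalently, this is $\mathrm{Tr}(E^L)$ for the $d^2\times d^2$ transfer matrix $E$ representing $\mathcal E$. Then $$1-d^{5/2}\tau(\mathcal E)^L\le\mathrm{Tr}(\mathcal E^L)\le 1+d^{5/2}\tau(\mathcal E)^L.$$
   Context: $M_d$ is the space of complex $d\times d$ matrices. The ergodicity coefficient is $\tau(\mathcal F):=\sup\{\|\mathcal F(\sigma)\|_1/\|\sigma\|_1:\ 0\ne\sigma\in M_d,\ \mathrm{Tr}\,\sigma=0\}$, where $\|\cdot\|_1$ is the trace norm. *)

From HB Require Import structures.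
From mathcomp Require Import all_boot all_order all_algebra.
Set Implicit Arguments. Unset Strict Implicit. Unset Printing Implicit Defensive.
Import Order.TTheory GRing.Theory Num.Theory.
Local Open Scope ring_scope.

Definition adjmx (C : numClosedFieldType) m n (A : 'M[C]_(m, n)) : 'M[C]_(n, m) :=
  (map_mx Num.conj A)^T.

Definition psdmx (C : numClosedFieldType) n (A : 'M[C]_n) : Prop :=
  forall v : 'rV[C]_n, 0 <= (v *m A *m adjmx v) 0 0.

(* trace norm ||A||_1 = Tr sqrt(A^* A) = sum of the square roots of the
   eigenvalues of the Hermitian matrix A^* A (spectral decomposition). *)
Definition trnorm (C : numClosedFieldType) n (A : 'M[C]_n) : C :=
  \sum_(i < n) sqrtC (spectral_diag (adjmx A *m A) 0 i).

(* The k*d x k*d matrix  sum_{i,j} E_ij (x) Xb i j  (block matrix with blocks Xb i j) *)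
Definition blockmx (C : numClosedFieldType) k d (Xb : 'I_k -> 'I_k -> 'M[C]_d)
  : 'M[C]_(k * d) :=
  \sum_(i < k) \sum_(j < k) \sum_(a < d) \sum_(b < d)
     Xb i j a b *: delta_mx (mxvec_index i a) (mxvec_index j b).

(* complete positivity: id_k (x) f maps PSD matrices on C^k (x) C^d to PSD ones, for all k *)
Definition completely_positive (C : numClosedFieldType) d
  (f : 'M[C]_d -> 'M[C]_d) : Prop :=
  forall (k : nat) (Xb : 'I_k -> 'I_k -> 'M[C]_d),
    psdmx (blockmx Xb) -> psdmx (blockmx (fun i j => f (Xb i j))).

Definition trace_preserving (C : numClosedFieldType) d
  (f : 'M[C]_d -> 'M[C]_d) : Prop :=
  forall X : 'M[C]_d, \tr (f X) = \tr X.

Definition ergo_ratios (C : numClosedFieldType) d (f : 'M[C]_d -> 'M[C]_d) (r : C) : Prop :=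
  exists s : 'M[C]_d, s != 0 /\ \tr s = 0 /\ r = trnorm (f s) / trnorm s.

(* t is the ergodicity coefficient tau(f): the supremum of ergo_ratios f,
   taken in the nonnegative reals (so the empty supremum, d = 1, is 0). *)
Definition is_ergodicity_coeff (C : numClosedFieldType) d (f : 'M[C]_d -> 'M[C]_d) (t : C)
  : Prop :=
  0 <= t /\ (forall r, ergo_ratios f r -> r <= t) /\
  (forall u, 0 <= u -> (forall r, ergo_ratios f r -> r <= u) -> t <= u).

From HB Require Import structures.
From mathcomp Require Import all_boot all_order all_algebra.
From mathcomp Require Import ring.
Import Order.TTheory GRing.Theory Num.Theory.
Set Implicit Arguments. Unset Strict Implicit. Unset Printing Implicit Defensive.
Local Open Scope ring_scope.

(* Write Tr E^L = sum_{a,b} (E^L e_ab)_ab and split e_ab = [a = b]/d * 1 + Y_ab with Y_ab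
   traceless.  Trace preservation turns the first parts into Tr(E^L 1)/d = 1.  For the
   second, |(E^L Y_ab)_ab| <= ||E^L Y_ab||_1 <= tau^L ||Y_ab||_1 <= tau^L sqrt d, the last
   step by Cauchy-Schwarz on the singular values and ||Y_ab||_2 <= ||e_ab||_2 = 1; summing
   d^2 terms gives |Tr E^L - 1| <= d^2 sqrt d tau^L.  Finally Tr E^L is real because a
   positive map preserves adjoints, which follows from polarization. *)

Section Adjoint.
Variable C : numClosedFieldType.

Lemma adjmxE m n (A : 'M[C]_(m, n)) i j : adjmx A i j = (A j i)^*.
Proof. by rewrite !mxE. Qed.

Lemma adjmx_trmxC m n (A : 'M[C]_(m, n)) : adjmx A = (A ^t Num.conj)%sesqui.
Proof. by rewrite /adjmx map_trmx. Qed.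

Fact adjmx_is_zmod_morphism m n : zmod_morphism (@adjmx C m n).
Proof. by move=> A B; apply/matrixP=> i j; rewrite !mxE rmorphB. Qed.

HB.instance Definition _ m n :=
  GRing.isZmodMorphism.Build _ _ (@adjmx C m n) (@adjmx_is_zmod_morphism m n).

Lemma adjmxD m n (A B : 'M[C]_(m, n)) : adjmx (A + B) = adjmx A + adjmx B.
Proof. exact: raddfD. Qed.

Lemma adjmxB m n (A B : 'M[C]_(m, n)) : adjmx (A - B) = adjmx A - adjmx B.
Proof. exact: raddfB. Qed.

Lemma adjmx_sum m n (I : Type) (r : seq I) (P : pred I) (F : I -> 'M[C]_(m, n)) :
  adjmx (\sum_(i <- r | P i) F i) = \sum_(i <- r | P i) adjmx (F i).
Proof. exact: raddf_sum. Qed.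

Lemma adjmxZ m n c (A : 'M[C]_(m, n)) : adjmx (c *: A) = c^* *: adjmx A.
Proof. by apply/matrixP=> i j; rewrite !mxE rmorphM. Qed.

Lemma adjmxM m n p (A : 'M[C]_(m, n)) (B : 'M[C]_(n, p)) :
  adjmx (A *m B) = adjmx B *m adjmx A.
Proof. by rewrite /adjmx map_mxM trmx_mul. Qed.

Lemma adjmxK m n (A : 'M[C]_(m, n)) : adjmx (adjmx A) = A.
Proof. by apply/matrixP=> i j; rewrite !mxE conjCK. Qed.

Lemma adjmx_delta m n (i : 'I_m) (j : 'I_n) :
  adjmx (delta_mx i j : 'M[C]_(m, n)) = delta_mx j i.
Proof. by rewrite /adjmx map_delta_mx trmx_delta. Qed.

Lemma adjmx_scalar n (c : C) : adjmx (c%:M : 'M[C]_n) = c^*%:M.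
Proof. by rewrite /adjmx map_scalar_mx tr_scalar_mx. Qed.

Lemma mxtrace_adjmx n (A : 'M[C]_n) : \tr (adjmx A) = (\tr A)^*.
Proof. by rewrite /adjmx mxtrace_tr trace_map_mx. Qed.

Lemma mxtrace_delta_mul n (A : 'M[C]_n) i j : \tr (delta_mx i j *m A) = A j i.
Proof.
rewrite -(mul_delta_mx (0 : 'I_1)) -mulmxA mxtrace_mulC trace_mx11.
by rewrite -rowE -colE !mxE.
Qed.

Lemma mxtrace_delta n (i j : 'I_n) : \tr (delta_mx i j : 'M[C]_n) = (i == j)%:R.
Proof. by rewrite -[delta_mx i j]mulmx1 mxtrace_delta_mul mxE eq_sym. Qed.

Lemma mulmx_adjmxE n (v w : 'rV[C]_n) (A : 'M[C]_n) :
  (v *m A *m adjmx w) 0 0 = \sum_p \sum_q v 0 p * A p q * (w 0 q)^*.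
Proof.
by rewrite mxE exchange_big; apply: eq_bigr => q _; rewrite adjmxE mxE mulr_suml.
Qed.

Lemma mulmx_delta_adjmx n (v w : 'rV[C]_n) p q :
  (v *m delta_mx p q *m adjmx w) 0 0 = v 0 p * (w 0 q)^*.
Proof.
rewrite -(mul_delta_mx (0 : 'I_1)) mulmxA -colE -mulmxA -rowE mxE big_ord1.
by rewrite !mxE.
Qed.

Lemma adjmx_mul_psd m n (y : 'M[C]_(m, n)) : psdmx (adjmx y *m y).
Proof.
move=> w; rewrite mulmxA -mulmxA -[w *m _]adjmxK adjmxM adjmxK mxE.
by apply: sumr_ge0 => k _; rewrite !mxE mulrC mul_conjC_ge0.
Qed.

Lemma adjmx_mul_normal m n (y : 'M[C]_(m, n)) : adjmx y *m y \is normalmx.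
Proof. by apply/normalmxP; rewrite -adjmx_trmxC adjmxM adjmxK. Qed.

End Adjoint.

Section SumSquares.
Variable R : numDomainType.

Lemma sum_sqr_le_sqr_sum (I : Type) (r : seq I) (x : I -> R) :
  (forall i, 0 <= x i) -> \sum_(i <- r) x i ^+ 2 <= (\sum_(i <- r) x i) ^+ 2.
Proof.
move=> x_ge0; elim: r => [|a r IHr]; first by rewrite !big_nil expr0n.
rewrite !big_cons sqrrD -addrA lerD2l (le_trans IHr) // lerDr.
by rewrite mulrn_wge0 // mulr_ge0 // sumr_ge0.
Qed.

Lemma sqr_sum_le_card_sum_sqr n (x : 'I_n -> R) :
  (forall i, 0 <= x i) -> (\sum_i x i) ^+ 2 <= n%:R * \sum_i x i ^+ 2.
Proof.
move=> x_ge0.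
have sum_sqr_diff : \sum_i \sum_j (x i - x j) ^+ 2 =
    (n%:R * \sum_i x i ^+ 2) *+ 2 - ((\sum_i x i) ^+ 2) *+ 2.
  under eq_bigr do under eq_bigr do rewrite sqrrB.
  under eq_bigr do rewrite big_split /= sumrB sumr_const card_ord sumrMnl -mulr_sumr.
  rewrite big_split /= sumrB sumr_const card_ord !sumrMnl -mulr_suml.
  by rewrite mulr_natl expr2 addrAC -mulr2n.
have : 0 <= \sum_i \sum_j (x i - x j) ^+ 2.
  apply: sumr_ge0 => i _; apply: sumr_ge0 => j _.
  by rewrite -realEsqr rpredB // ger0_real.
by rewrite sum_sqr_diff subr_ge0 ler_pMn2r.
Qed.

End SumSquares.

Section TraceNorm.
Variable C : numClosedFieldType.

Lemma diag_spectral_normal n (A : 'M[C]_n) : A \is normalmx ->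
  diag_mx (spectral_diag A) = spectralmx A *m A *m adjmx (spectralmx A).
Proof.
move=> /orthomx_spectralP; set P := spectralmx A; set s := spectral_diag A => ->.
rewrite adjmx_trmxC -invmx_unitary ?spectral_unitarymx //.
by rewrite !mulmxA mulmxV ?spectral_unit // mul1mx mulmxK ?spectral_unit.
Qed.

Lemma spectral_diag_ge0 n (A : 'M[C]_n) i :
  A \is normalmx -> psdmx A -> 0 <= spectral_diag A 0 i.
Proof.
move=> /diag_spectral_normal eD psdA.
have /matrixP/(_ i i) := eD; rewrite mxE eqxx mulr1n => ->.
set P := spectralmx A; congr (0 <= _): (psdA (row i P)).
by rewrite -row_mul !mxE; apply: eq_bigr => k _; rewrite !adjmxE !mxE.
Qed.

Lemma sum_spectral_diag n (A : 'M[C]_n) :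
  A \is normalmx -> \sum_i spectral_diag A 0 i = \tr A.
Proof.
move=> /diag_spectral_normal eD; rewrite -mxtrace_diag eD mxtrace_mulC mulmxA.
by rewrite adjmx_trmxC -invmx_unitary ?spectral_unitarymx // mulVmx ?spectral_unit ?mul1mx.
Qed.

Definition frobsq m n (y : 'M[C]_(m, n)) := \sum_i \sum_j `|y i j| ^+ 2.

Lemma frobsq_ge0 m n (y : 'M[C]_(m, n)) : 0 <= frobsq y.
Proof. by apply: sumr_ge0 => i _; apply: sumr_ge0 => j _; apply: exprn_ge0. Qed.

Lemma normr_sqr_le_frobsq m n (y : 'M[C]_(m, n)) i j : `|y i j| ^+ 2 <= frobsq y.
Proof.
have nn k : 0 <= \sum_(l < n) `|y k l| ^+ 2 by apply: sumr_ge0 => l _; apply: exprn_ge0.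
rewrite /frobsq (bigD1 i) //= (bigD1 j) //= -addrA lerDl.
by rewrite addr_ge0 ?sumr_ge0 // => l _; apply: exprn_ge0.
Qed.

Lemma mxtrace_adjmx_mul m n (y : 'M[C]_(m, n)) : \tr (adjmx y *m y) = frobsq y.
Proof.
rewrite /frobsq exchange_big; apply: eq_bigr => j _; rewrite mxE.
by apply: eq_bigr => i _; rewrite adjmxE normCKC.
Qed.

Lemma sum_sqrtC_singular_sqr n (y : 'M[C]_n) :
  \sum_i sqrtC (spectral_diag (adjmx y *m y) 0 i) ^+ 2 = frobsq y.
Proof.
rewrite -mxtrace_adjmx_mul -sum_spectral_diag ?adjmx_mul_normal //.
by apply: eq_bigr => i _; rewrite sqrtCK.
Qed.

Lemma singular_ge0 n (y : 'M[C]_n) i :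
  0 <= sqrtC (spectral_diag (adjmx y *m y) 0 i).
Proof.
by rewrite sqrtC_ge0 spectral_diag_ge0 //; [apply: adjmx_mul_normal | apply: adjmx_mul_psd].
Qed.

Lemma trnorm_ge0 n (y : 'M[C]_n) : 0 <= trnorm y.
Proof. by apply: sumr_ge0 => i _; apply: singular_ge0. Qed.

Lemma frobsq_le_trnorm_sqr n (y : 'M[C]_n) : frobsq y <= trnorm y ^+ 2.
Proof.
by rewrite -sum_sqrtC_singular_sqr; apply: sum_sqr_le_sqr_sum => i; apply: singular_ge0.
Qed.

Lemma trnorm_sqr_le n (y : 'M[C]_n) : trnorm y ^+ 2 <= n%:R * frobsq y.
Proof.
by rewrite -sum_sqrtC_singular_sqr; apply: sqr_sum_le_card_sum_sqr => i; apply: singular_ge0.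
Qed.

Lemma normr_le_trnorm n (y : 'M[C]_n) i j : `|y i j| <= trnorm y.
Proof.
rewrite -ler_sqr ?nnegrE ?trnorm_ge0 //.
exact: le_trans (normr_sqr_le_frobsq y i j) (frobsq_le_trnorm_sqr y).
Qed.

Lemma trnorm_le_sqrt n (y : 'M[C]_n) : trnorm y <= sqrtC (n%:R * frobsq y).
Proof.
rewrite -[trnorm y]sqrCK ?trnorm_ge0 // ler_sqrtC ?trnorm_sqr_le //.
  by rewrite nnegrE exprn_ge0 ?trnorm_ge0.
by rewrite nnegrE mulr_ge0 ?frobsq_ge0.
Qed.

Lemma trnorm_eq0 n (y : 'M[C]_n) : (trnorm y == 0) = (y == 0).
Proof.
apply/eqP/eqP => [y0 | ->].
  apply/matrixP => i j; rewrite mxE; apply/normr0_eq0/eqP.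
  by rewrite eq_le normr_ge0 andbT -y0 normr_le_trnorm.
apply/eqP; rewrite eq_le trnorm_ge0 andbT (le_trans (trnorm_le_sqrt _)) //.
rewrite /frobsq big1 ?mulr0 ?sqrtC0 // => i _.
by rewrite big1 // => j _; rewrite mxE normr0 expr0n.
Qed.

End TraceNorm.

Section Polarization.
Variables (C : numClosedFieldType) (n : nat) (V : lmodType C).
Variable conjV : {additive V -> V}.
Hypothesis conjVZ : forall (c : C) x, conjV (c *: x) = c^* *: conjV x.
Variable f : {linear 'M[C]_n -> V}.
Hypothesis f_rank1 : forall w : 'rV[C]_n, conjV (f (adjmx w *m w)) = f (adjmx w *m w).

Lemma rank1_polarization (v w : 'rV[C]_n) :
  conjV (f (adjmx v *m w)) = f (adjmx w *m v).
Proof.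
set P := f (adjmx v *m w); set Q := f (adjmx w *m v).
have polar c : c^* *: (conjV P - Q) + c *: (conjV Q - P) = 0.
  have h := f_rank1 (v + c *: w).
  rewrite adjmxD adjmxZ mulmxDl !mulmxDr -!scalemxAl -!scalemxAr scalerA in h.
  rewrite !linearD !linearZ /= -/P -/Q addrA -[_ + c *: P + _]addrA in h.
  rewrite !raddfD !conjVZ [c^*^*]conjCK !f_rank1 -normCKC in h.
  rewrite [(`|c| ^+ 2)^*]geC0_conj ?exprn_ge0 // in h.
  move: h => /(addIr _) /(addrI _) h.
  by rewrite !scalerBr addrACA h [c *: P + _]addrC addrACA !subrr addr0.
have /eqP := polar 1; rewrite conjC1 !scale1r addrC addr_eq0 => /eqP polar1.
have /eqP := polar 'i; rewrite polar1 conjCi scaleNr scalerN -opprD oppr_eq0 -scalerDl.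
by rewrite scaler_eq0 -mulr2n mulrn_eq0 (negbTE (neq0Ci C)) /= subr_eq0 => /eqP.
Qed.

Lemma linear_adjmx_conj (X : 'M[C]_n) : f (adjmx X) = conjV (f X).
Proof.
have f_delta c i j : f (adjmx (c *: delta_mx i j)) = conjV (f (c *: delta_mx i j)).
  have rank1 (k l : 'I_n) :
      delta_mx k l = adjmx (delta_mx (0 : 'I_1) k) *m delta_mx 0 l :> 'M[C]_n.
    by rewrite adjmx_delta mul_delta_mx.
  rewrite adjmxZ adjmx_delta !linearZ /= conjVZ (rank1 j i) (rank1 i j).
  by rewrite rank1_polarization.
rewrite [X]matrix_sum_delta adjmx_sum !linear_sum raddf_sum.
under eq_bigr do rewrite adjmx_sum linear_sum.
under [in RHS]eq_bigr do rewrite linear_sum raddf_sum.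
by under eq_bigr do under eq_bigr do rewrite f_delta.
Qed.

End Polarization.

Section Positivity.
Variable C : numClosedFieldType.

(* Polarization applied to the functional X |-> tr (X A), which is real on every
   rank-one X = w^* w. *)
Lemma psdmx_adjmx n (A : 'M[C]_n) : psdmx A -> adjmx A = A.
Proof.
move=> psdA; apply/matrixP => i j; rewrite adjmxE.
have f_rank1 (w : 'rV[C]_n) :
    (\tr (adjmx w *m w *m A))^* = \tr (adjmx w *m w *m A) :> C^o.
  by rewrite -mulmxA mxtrace_mulC trace_mx11 geC0_conj ?psdA.
have := @linear_adjmx_conj C n C^o Num.conj (fun c x => rmorphM Num.conj c x)
  (mxtrace \o mulmxr A) f_rank1 (delta_mx j i).
by rewrite /= adjmx_delta !mxtrace_delta_mul => ->; rewrite conjCK.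
Qed.

Lemma blockmx_qform k d (Xb : 'I_k -> 'I_k -> 'M[C]_d) (U : 'M[C]_(k, d)) :
  (mxvec U *m blockmx Xb *m adjmx (mxvec U)) 0 0 =
  \sum_i \sum_j (row i U *m Xb i j *m adjmx (row j U)) 0 0.
Proof.
pose q A := (mxvec U *m A *m adjmx (mxvec U)) 0 0.
have q_sum (I : Type) (r : seq I) (F : I -> 'M[C]_(k * d)) :
  q (\sum_(i <- r) F i) = \sum_(i <- r) q (F i).
  by rewrite /q mulmx_sumr mulmx_suml summxE.
have q_delta c i j a b :
    q (c *: delta_mx (mxvec_index i a) (mxvec_index j b)) = c * U i a * (U j b)^*.
  by rewrite /q -scalemxAr -scalemxAl mxE mulmx_delta_adjmx !mxvecE mulrA.
rewrite -[LHS]/(q (blockmx Xb)) /blockmx q_sum; apply: eq_bigr => i _; rewrite q_sum.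
apply: eq_bigr => j _; rewrite q_sum mulmx_adjmxE; apply: eq_bigr => a _.
by rewrite q_sum; apply: eq_bigr => b _; rewrite q_delta !mxE (mulrC (Xb i j a b)).
Qed.

Lemma psdmx_blockmx1 d (X : 'M[C]_d) :
  psdmx (blockmx (fun _ _ : 'I_1 => X)) <-> psdmx X.
Proof.
have qform1 (U : 'M[C]_(1, d)) :
    (mxvec U *m blockmx (fun _ _ : 'I_1 => X) *m adjmx (mxvec U)) 0 0 =
    (U *m X *m adjmx U) 0 0.
  by rewrite blockmx_qform !big_ord1 row_id.
split=> psdX v; first by rewrite -qform1.
by rewrite -(vec_mxK v) qform1.
Qed.

Lemma completely_positive_psd d (E : 'M[C]_d -> 'M[C]_d) (X : 'M[C]_d) :
  completely_positive E -> psdmx X -> psdmx (E X).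
Proof. by move=> E_cp /psdmx_blockmx1 /E_cp /psdmx_blockmx1. Qed.

End Positivity.

Section HermPreserving.
Variables (C : numClosedFieldType) (d : nat).

Definition herm_preserving (E : 'M[C]_d -> 'M[C]_d) :=
  forall X, E (adjmx X) = adjmx (E X).

Lemma completely_positive_herm_preserving (E : {linear 'M[C]_d -> 'M[C]_d}) :
  completely_positive E -> herm_preserving E.
Proof.
move=> E_cp X.
apply: (@linear_adjmx_conj _ _ _ (@adjmx C d d : {additive _ -> _}) (@adjmxZ C d d)) => w.
by apply/psdmx_adjmx/completely_positive_psd/adjmx_mul_psd.
Qed.

Lemma herm_preserving_iter (E : 'M[C]_d -> 'M[C]_d) n :
  herm_preserving E -> herm_preserving (iter n E).
Proof. by move=> E_herm X; elim: n => //= n ->. Qed.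

Definition maptrace (g : 'M[C]_d -> 'M[C]_d) := \sum_a \sum_b g (delta_mx a b) a b.

Lemma maptrace_conj (g : 'M[C]_d -> 'M[C]_d) :
  herm_preserving g -> (maptrace g)^* = maptrace g.
Proof.
move=> g_herm; rewrite /maptrace [RHS]exchange_big rmorph_sum; apply: eq_bigr => a _.
rewrite rmorph_sum; apply: eq_bigr => b _.
by rewrite -[delta_mx b a]adjmx_delta g_herm adjmxE.
Qed.

End HermPreserving.

Section Traceless.
Variables (C : numClosedFieldType) (d : nat).
Hypothesis d_gt0 : (0 < d)%N.

Definition traceless (X : 'M[C]_d) := X - (\tr X / d%:R)%:M.

Let d_neq0 : d%:R != 0 :> C. Proof. by rewrite pnatr_eq0 -lt0n. Qed.

Lemma mxtrace_traceless X : \tr (traceless X) = 0.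
Proof. by rewrite linearB /= mxtrace_scalar -[(_ / _) *+ d]mulr_natr divfK ?subrr. Qed.

Lemma frobsq_traceless X :
  frobsq (traceless X) = frobsq X - `|\tr X| ^+ 2 / d%:R.
Proof.
rewrite -!mxtrace_adjmx_mul /traceless adjmxB adjmx_scalar mulmxBl !mulmxBr.
rewrite mul_mx_scalar !mul_scalar_mx !linearB !linearZ /= mxtrace_scalar mxtrace_adjmx.
have -> : (\tr X / d%:R)^* = (\tr X)^* / d%:R by rewrite fmorph_div rmorph_nat.
by rewrite normCK -mulr_natr; field.
Qed.

Lemma frobsq_traceless_le X : frobsq (traceless X) <= frobsq X.
Proof. by rewrite frobsq_traceless gerBl divr_ge0 ?exprn_ge0 ?ler0n. Qed.

Lemma frobsq_delta (a b : 'I_d) : frobsq (delta_mx a b : 'M[C]_d) = 1.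
Proof. by rewrite -mxtrace_adjmx_mul adjmx_delta mul_delta_mx mxtrace_delta eqxx. Qed.

End Traceless.

Section Iterates.
Variables (C : numClosedFieldType) (d : nat) (E : {linear 'M[C]_d -> 'M[C]_d}).

Lemma iter_linearP n a X Y : iter n E (a *: X + Y) = a *: iter n E X + iter n E Y.
Proof. by elim: n => //= n ->; rewrite linearP. Qed.

Lemma mul_mxvec_lin_mx_exp n X : mxvec X *m lin_mx E ^+ n = mxvec (iter n E X).
Proof.
elim: n X => [|n IHn] X; first by rewrite expr0 mulmx1.
by rewrite exprS -mulmxE mulmxA mul_vec_lin IHn iterSr.
Qed.

Lemma mxtrace_lin_mx_exp n : \tr (lin_mx E ^+ n) = maptrace (iter n E).
Proof.
rewrite /mxtrace /maptrace (reindex _ (curry_mxvec_bij _ _)) /= pair_bigA /=.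
apply: eq_bigr => [[a b]] _ /=.
by rewrite -[RHS]mxvecE -mul_mxvec_lin_mx_exp mxvec_delta -rowE mxE.
Qed.

Hypothesis E_tp : trace_preserving E.

Lemma mxtrace_iter n X : \tr (iter n E X) = \tr X.
Proof. by elim: n => //= n IHn; rewrite E_tp. Qed.

Lemma maptrace_iter n : (0 < d)%N ->
  maptrace (iter n E) = 1 + \sum_a \sum_b iter n E (traceless (delta_mx a b)) a b.
Proof.
rewrite /maptrace => d_gt0; have d_neq0 : d%:R != 0 :> C by rewrite pnatr_eq0 -lt0n.
have split_delta a b : delta_mx a b =
    (a == b)%:R / d%:R *: 1%:M + traceless (delta_mx a b) :> 'M[C]_d.
  by rewrite /traceless mxtrace_delta scalemx1 addrC subrK.
under eq_bigr do under eq_bigr do rewrite split_delta iter_linearP !mxE.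
under eq_bigr do rewrite big_split /=.
rewrite big_split /=; congr (_ + _).
set G := iter n E 1%:M.
have diag_only a : \sum_b (a == b)%:R / d%:R * G a b = G a a / d%:R.
  rewrite (bigD1 a) //= eqxx big1 ?addr0 ?mul1r 1?mulrC // => b.
  by rewrite eq_sym => /negbTE ->; rewrite !mul0r.
under eq_bigr do rewrite diag_only.
by rewrite -mulr_suml -/(\tr G) mxtrace_iter mxtrace1 divff.
Qed.

End Iterates.

Section Contraction.
Variables (C : numClosedFieldType) (d : nat) (E : {linear 'M[C]_d -> 'M[C]_d}).
Variable t : C.
Hypothesis t_tau : is_ergodicity_coeff E t.

Lemma ergodicity_coeff_ge0 : 0 <= t.
Proof. by case: t_tau. Qed.

Lemma trnorm_traceless_le s : \tr s = 0 -> trnorm (E s) <= t * trnorm s.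
Proof.
move=> tr_s0; have [-> | s_neq0] := eqVneq s 0.
  have /eqP trnorm0 : trnorm (0 : 'M[C]_d) == 0 by rewrite trnorm_eq0.
  by rewrite linear0 trnorm0 mulr0.
have trnorm_gt0 : 0 < trnorm s by rewrite lt_def trnorm_eq0 s_neq0 trnorm_ge0.
have [_ [t_ub _]] := t_tau.
by rewrite -ler_pdivrMr //; apply: t_ub; exists s.
Qed.

Hypothesis E_tp : trace_preserving E.

Lemma trnorm_iter_traceless_le n s :
  \tr s = 0 -> trnorm (iter n E s) <= t ^+ n * trnorm s.
Proof.
move=> tr_s0; elim: n => [|n IHn]; first by rewrite mul1r.
rewrite iterS exprS -mulrA (le_trans (trnorm_traceless_le _)) ?mxtrace_iter //.
by rewrite ler_wpM2l // ergodicity_coeff_ge0.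
Qed.

Lemma normr_iter_traceless_delta n a b : (0 < d)%N ->
  `|iter n E (traceless (delta_mx a b)) a b| <= t ^+ n * sqrtC d%:R.
Proof.
move=> d_gt0; apply: le_trans (normr_le_trnorm _ a b) _.
apply: le_trans (trnorm_iter_traceless_le _ (mxtrace_traceless _ _)) _ => //.
rewrite ler_wpM2l ?exprn_ge0 ?ergodicity_coeff_ge0 //.
apply: le_trans (trnorm_le_sqrt _) _.
rewrite ler_sqrtC ?nnegrE ?mulr_ge0 ?frobsq_ge0 // ler_piMr //.
by rewrite -(frobsq_delta C a b) frobsq_traceless_le.
Qed.

End Contraction.

Theorem mainTheorem16 (C : numClosedFieldType) (d : nat) (d_gt0 : (0 < d)%N)
  (E : {linear 'M[C]_d -> 'M[C]_d})
  (E_cp : completely_positive E) (E_tp : trace_preserving E)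
  (L : nat) (L_ge1 : (1 <= L)%N) (t : C) (t_tau : is_ergodicity_coeff E t) :
  let c := (d%:R ^+ 2 * sqrtC d%:R : C) in
  1 - c * t ^+ L <= \tr (lin_mx E ^+ L) /\ \tr (lin_mx E ^+ L) <= 1 + c * t ^+ L.
Proof.
move=> c; set T := \tr (lin_mx E ^+ L).
have T_sub1 : T - 1 = \sum_a \sum_b iter L E (traceless (delta_mx a b)) a b.
  by rewrite /T mxtrace_lin_mx_exp maptrace_iter // addrC addKr.
have T_real : T \is Num.real.
  rewrite CrealE /T mxtrace_lin_mx_exp maptrace_conj //.
  exact/herm_preserving_iter/completely_positive_herm_preserving.
have : `|T - 1| <= c * t ^+ L.
  have entry_le a b := normr_iter_traceless_delta t_tau E_tp L a b d_gt0.
  rewrite T_sub1; apply: le_trans (ler_norm_sum _ _ _) _.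
  apply: le_trans (ler_sum _ (fun a _ => le_trans (ler_norm_sum _ _ _)
                                  (ler_sum _ (fun b _ => entry_le a b)))) _.
  rewrite !sumr_const !card_ord -mulrnA -[_ *+ (d * d)]mulr_natr natrM /c.
  by rewrite le_eqVlt; apply/orP; left; apply/eqP; ring.
rewrite real_ler_norml ?rpredB ?rpred1 // => /andP [lo hi].
by split; [rewrite addrC -lerBrDr | rewrite -lerBlDl].
Qed.
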